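(* Let $\mathcal{M}$ be a separable metric space, let $f:\mathcal{M}\to\mathcal{M}$ be a continuous bijection with continuous inverse, and let $\mathcal{X}\subseteq\mathcal{M}$ be forward invariant under $f$ and path connected. Consider $x_{k+1}=f(x_k)$ on $\mathcal{X}$ with set of $\omega$-limit sets $\mathcal{W}$ and set of $\alpha$-limit sets $\mathcal{A}$. Suppose: (T1) there exist a separable metric space $\mathcal{Z}$, a continuous bijection $g:\mathcal{Z}\to\mathcal{Z}$ with continuous inverse, and a continuous map $F:\mathcal{X}\to\mathcal{Z}$ with $F\circ f=g\circ F$ on $\mathcal{X}$, such that $z_{k+1}=g(z_k)$ and $z_{k+1}=g^{-1}(z_k)$ on $\mathcal{Z}$ both have closed basins; (T2) every trajectory in $\mathcal{X}$ is forward precompact or backward precompact in $\mathcal{X}$; (T3) $\mathcal{W}\cup\mathcal{A}$ is countable. Let $\widehat{\mathcal{W}}$ be the set of $\Omega\in\mathcal{W}$ such that $D^+_{\mathcal{X}}(\Omega)$ contains a point whose trajectory is forward precompact in $\mathcal{X}$, and let $\widehat{\mathcal{A}}$ be the set of $\Gamma\in\mathcal{A}$ such that $D^-_{\mathcal{X}}(\Gamma)$ contains a point whose trajectory is backward precompact in $\mathcal{X}$. Then $F(S)=F(S')$ for all $S,S'\in\widehat{\mathcal{W}}\cup\widehat{\mathcal{A}}$.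
   Context: Forward orbit of $\xi$: $\{f^k(\xi)\mid k\in\mathbb{N}\}$; backward orbit: $\{f^{-k}(\xi)\mid k\in\mathbb{N}\}$. A set is precompact in $\mathcal{X}$ if its closure in $\mathcal{X}$ is compact; a trajectory is forward (backward) precompact if its forward (backward) orbit is precompact. $\omega_{\mathcal{X}}(\xi)$ is the set of $x\in\mathcal{X}$ with $f^{k_j}(\xi)\to x$ for some $k_j\to\infty$; $\alpha_{\mathcal{X}}(\xi)$ likewise with $f^{-k_j}$. $\mathcal{W}=\{\omega_{\mathcal{X}}(\xi)\mid\xi\in\mathcal{X}\}$, $\mathcal{A}=\{\alpha_{\mathcal{X}}(\xi)\mid\xi\in\mathcal{X}\}$, $D^+_{\mathcal{X}}(\Omega)=\{\xi\in\mathcal{X}\mid\omega_{\mathcal{X}}(\xi)=\Omega\}$, $D^-_{\mathcal{X}}(\Gamma)=\{\xi\in\mathcal{X}\mid\alpha_{\mathcal{X}}(\xi)=\Gamma\}$. A system has closed basins if the domain of attraction of each of its $\omega$-limit sets is closed (for a time reversal: each domain of repulsion of each $\alpha$-limit set of the original system is closed). Same notions on $\mathcal{Z}$ for $g$. *)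

From HB Require Import structures.
From mathcomp Require Import all_boot all_order all_algebra.
From mathcomp Require Import all_classical all_reals all_analysis.
Set Implicit Arguments. Unset Strict Implicit. Unset Printing Implicit Defensive.
Import Order.TTheory GRing.Theory Num.Theory.
Local Open Scope classical_set_scope.
Local Open Scope ring_scope.

Definition metric_space (R : realType) (M : pseudoMetricType R) : Prop :=
  hausdorff_space M.

Definition separable_space (T : topologicalType) : Prop :=
  exists S : set T, countable S /\ dense S.

Definition path_connected (R : realType) (T : topologicalType) (X : set T) : Prop :=
  forall x y, X x -> X y ->
    exists gam : R -> T, {within `[0, 1], continuous gam} /\
      gam 0 = x /\ gam 1 = y /\ gam @` `[0, 1] `<=` X.

Definition fwd_orbit (T : Type) (f : T -> T) (xi : T) : set T :=
  [set x | exists k : nat, x = iter k f xi].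
Definition bwd_orbit (T : Type) (finv : T -> T) (xi : T) : set T :=
  [set x | exists k : nat, x = iter k finv xi].

(* S is precompact in X: S lies in X and its closure in X (= closure S ∩ X)
   is compact. *)
Definition precompact_in (T : topologicalType) (X S : set T) : Prop :=
  S `<=` X /\ compact (closure S `&` X).

Definition omega_lim (T : topologicalType) (X : set T) (f : T -> T) (xi : T)
  : set T :=
  [set x | X x /\ exists k : nat -> nat,
     (forall N, exists J, forall j, (J <= j)%N -> (N <= k j)%N) /\
     (fun j => iter (k j) f xi) @ \oo --> x].

Definition alpha_lim (T : topologicalType) (X : set T) (finv : T -> T) (xi : T)
  : set T := omega_lim X finv xi.

Definition Wset (T : topologicalType) (X : set T) (f : T -> T) : set (set T) :=
  [set omega_lim X f xi | xi in X].
Definition Aset (T : topologicalType) (X : set T) (finv : T -> T) : set (set T) :=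
  [set alpha_lim X finv xi | xi in X].

Definition Dplus (T : topologicalType) (X : set T) (f : T -> T) (Om : set T)
  : set T := [set xi | X xi /\ omega_lim X f xi = Om].
Definition Dminus (T : topologicalType) (X : set T) (finv : T -> T) (Ga : set T)
  : set T := [set xi | X xi /\ alpha_lim X finv xi = Ga].

Definition closed_basins (T : topologicalType) (h : T -> T) : Prop :=
  forall Om, Wset setT h Om -> closed (Dplus setT h Om).

Definition What (T : topologicalType) (X : set T) (f : T -> T) : set (set T) :=
  [set Om | Wset X f Om /\
     exists xi, Dplus X f Om xi /\ precompact_in X (fwd_orbit f xi)].
Definition Ahat (T : topologicalType) (X : set T) (finv : T -> T) : set (set T) :=
  [set Ga | Aset X finv Ga /\
     exists xi, Dminus X finv Ga xi /\ precompact_in X (bwd_orbit finv xi)].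

From HB Require Import structures.
From mathcomp Require Import all_boot all_order all_algebra.
From mathcomp Require Import all_classical all_reals all_analysis.
From mathcomp Require Import lra.
Import Order.TTheory GRing.Theory Num.Theory numFieldTopology.Exports.
Local Open Scope classical_set_scope.
Local Open Scope ring_scope.

(* For x in X let V x be the omega-limit set of F x under g. If the forward
   orbit of x is precompact then V x = F (omega x). Otherwise its backward orbit
   is precompact, and any y in alpha x has a precompact forward orbit; F y is a
   limit of points g^-n (F x), all in the closed basin of V x, so again
   V x = V y = F (omega y). Hence V takes countably many values on X, and its
   level sets are closed in X since the basins are closed. Along a path in X
   this would split [0, 1] into countably many disjoint closed sets, so by
   Sierpinski's theorem V is constant on X; likewise for the omega-limit sets
   V' x of F x under g^-1. Thus F S = V on W-hat and F S = V' on A-hat. Finally,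
   if x has a precompact forward orbit and y is in omega x, then F y lies in the
   closed g^-1-invariant set V x, so V' = V' y is contained in V; symmetrically
   V is contained in V'. *)

Section ClosedFibers.
Variable R : realType.

Lemma closed_inf_mem (A : set R) : closed A -> A !=set0 -> has_lbound A -> A (inf A).
Proof.
move=> cA A0 lbA; apply: cA => B /nbhs_ballP[e e0 eB].
have [t At tlt] := inf_adherent e0 (conj A0 lbA).
exists t; split => //; apply: eB.
have ge_t := ge_inf lbA At; rewrite /ball /= distrC ger0_norm ?subr_ge0 //; lra.
Qed.

Lemma closed_sup_mem (A : set R) : closed A -> A !=set0 -> has_ubound A -> A (sup A).
Proof. by move=> cA A0 ubA; apply: cA; exact: closure_sup. Qed.

Lemma nested_itvs_meet (a b : R^nat) : nondecreasing_seq a -> nonincreasing_seq b ->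
  (forall n, a n <= b n) -> exists x, forall n, a n <= x <= b n.
Proof.
move=> a_nd b_ni ab; have a_le_b m n : a m <= b n.
  by rewrite (le_trans (a_nd _ _ (leq_maxl m n))) ?(le_trans (ab _)) ?b_ni ?leq_maxr.
have supA : has_sup (range a) by split; [exists (a 0%N), 0%N | exists (b 0%N) => _ [m _ <-]].
exists (sup (range a)) => n; apply/andP; split.
  by apply: sup_upper_bound => //; exists n.
by apply: ge_sup; [case: supA | move=> _ [m _ <-]].
Qed.

Definition closed_fibers01 (c : R -> nat) :=
  forall v, closed [set t | 0 <= t <= 1 /\ c t = v].

Lemma closed_fiber_itv (c : R -> nat) v a b : closed_fibers01 c -> 0 <= a -> b <= 1 ->
  closed [set t | a <= t <= b /\ c t = v].
Proof.
move=> cc a0 b1.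
have -> : [set t | a <= t <= b /\ c t = v] = [set t | 0 <= t <= 1 /\ c t = v] `&` `[a, b].
  apply/seteqP; split => t /=; rewrite in_itv /=.
    case=> /andP[ta tb] ctv; split; last by rewrite ta tb.
    by split => //; apply/andP; split; lra.
  by case=> -[_ ctv] /andP[ta tb]; rewrite ta tb.
by apply: closedI; [exact: cc | exact: itv_closed].
Qed.

Lemma closed_fibers01_rev {c : R -> nat} :
  closed_fibers01 c -> closed_fibers01 (fun t => c (1 - t)).
Proof.
move=> cc v.
have -> : [set t | 0 <= t <= 1 /\ c (1 - t) = v] =
    (fun t => 1 - t) @^-1` [set t | 0 <= t <= 1 /\ c t = v].
  by apply/seteqP; split => t /= [/andP[t0 t1] ctv]; split => //; apply/andP; split; lra.
apply: preimage_closed (cc v) => t _; apply: cvgB; [exact: cvg_cst | exact: cvg_id].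
Qed.

Lemma closed_fibers01_avoid (c : R -> nat) n a b : closed_fibers01 c ->
  0 <= a -> a <= b -> b <= 1 -> c a <> c b -> c a <> n ->
  exists a' b', [/\ a <= a', a' <= b', b' <= b, c a' <> c b' &
    forall t, a' <= t <= b' -> c t <> n].
Proof.
move=> cc a0 ab b1 cab can.
have [[t0 [t0ab ct0]]|avoid] := pselect (exists t, a <= t <= b /\ c t = n); last first.
  by exists a, b; split => // t tab ctn; apply: avoid; exists t.
pose A := [set t | a <= t <= b /\ c t = n].
have lbA : has_lbound A by exists a => t [/andP[]].
have [/andP[a_s s_b] cs] : A (inf A).
  by apply: closed_inf_mem; [exact: closed_fiber_itv | exists t0 |].
have {}a_s : a < inf A.
  by rewrite lt_neqAle a_s andbT; apply/eqP => a_eq; apply: can; rewrite a_eq.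
pose B := [set t | a <= t <= inf A /\ c t = c a].
have supB : has_sup B.
  by split; [exists a; rewrite /B /= lexx (ltW a_s) | exists (inf A) => t [/andP[]]].
have [/andP[a_d d_s] cd] : B (sup B).
  by apply: closed_sup_mem; [apply: closed_fiber_itv => //; lra | case: supB..].
have {}d_s : sup B < inf A.
  by rewrite lt_neqAle d_s andbT; apply/eqP => d_eq; apply: can; rewrite -cd d_eq cs.
(* the midpoint of ]sup B, inf A[ is past the fibre of [c a] in [a, inf A] and before that of [n] *)
exists a, ((sup B + inf A) / 2); split; [done | lra | lra | |].
  move=> cae; have : B ((sup B + inf A) / 2) by split => //; apply/andP; split; lra.
  by move/(sup_upper_bound supB); lra.
move=> t /andP[ta te] ctn.
have tA : A t by split => //; apply/andP; split; lra.
have := ge_inf lbA tA; lra.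
Qed.

Lemma closed_fibers01_step {c : R -> nat} n a b : closed_fibers01 c ->
  0 <= a -> a <= b -> b <= 1 -> c a <> c b ->
  exists a' b', [/\ a <= a', a' <= b', b' <= b, c a' <> c b' &
    forall t, a' <= t <= b' -> c t <> n].
Proof.
move=> cc a0 ab b1 cab.
case: (eqVneq (c a) n) => [can | /eqP]; last exact: closed_fibers01_avoid.
have cbn : c b <> n by rewrite -can => /esym.
(* reflect [a, b] to [1 - b, 1 - a], whose left endpoint now has a value other than [n] *)
have oneK (t : R) : 1 - (1 - t) = t by lra.
have [|||||a' [b' [ba' a'b' b'a cb'a' avoid]]] :=
  closed_fibers01_avoid (fun t => c (1 - t)) n (1 - b) (1 - a) (closed_fibers01_rev cc);
  rewrite ?oneK; [lra | lra | lra | by move/esym | by [] |].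
exists (1 - b'), (1 - a'); split; [lra | lra | lra | by move/esym |].
by move=> t /andP[tb' ta']; rewrite -[t]oneK; apply: avoid; apply/andP; split; lra.
Qed.

Lemma closed_fibers01_const (c : R -> nat) : closed_fibers01 c -> c 0 = c 1.
Proof.
move=> cc; apply: contrapT => c01.
pose good (p : R * R) := [/\ 0 <= p.1, p.1 <= p.2, p.2 <= 1 & c p.1 <> c p.2].
have /choice[next nextP] : forall np : nat * (R * R), exists q : R * R, good np.2 ->
    good q /\ [/\ np.2.1 <= q.1, q.2 <= np.2.2 & forall t, q.1 <= t <= q.2 -> c t <> np.1].
  move=> [n [a b]]; have [|not_good] := pselect (good (a, b)); last by exists (0, 0) => /not_good.
  case=> /= a0 ab b1 cab.
  have [a' [b' [aa' a'b' b'b ca'b' avoid]]] := closed_fibers01_step n a b cc a0 ab b1 cab.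
  by exists (a', b') => _; split; [split => /=; [lra | lra | lra | done] | split].
pose J := fix J n := if n is m.+1 then next (m, J m) else (0, 1).
have goodJ n : good (J n).
  by elim: n => [|n /(nextP (n, _)) []//]; split => //=; lra.
have [x xJ] : exists x, forall n, (J n).1 <= x <= (J n).2.
  apply: (@nested_itvs_meet (fun n => (J n).1) (fun n => (J n).2)).
  - by apply/nondecreasing_seqP => n; have [_ []] := nextP (n, J n) (goodJ n).
  - by apply/nonincreasing_seqP => n; have [_ []] := nextP (n, J n) (goodJ n).
  - by move=> n; have [] := goodJ n.
(* the interval of stage [n.+1] avoids the value [n], so the common point [x] avoids [c x] *)
have [_ [_ _ avoid]] := nextP (c x, J (c x)) (goodJ (c x)).
exact: avoid x (xJ (c x).+1) erefl.
Qed.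

End ClosedFibers.

Section Topology.
Context {T : topologicalType}.

Lemma near_inftyP (P : nat -> Prop) :
  (\forall n \near \oo, P n) <-> exists N, forall n, (N <= n)%N -> P n.
Proof. by split => [[N _ PN]|[N PN]]; exists N. Qed.

Lemma filter_shiftS (u : nat -> T) : (fun n => u n.+1) @ \oo = u @ \oo.
Proof.
apply/seteqP; split => A /=; first exact: near_inftyS.
by move=> /near_inftyP[N uA]; apply/near_inftyP; exists N => n /leqW; exact: uA.
Qed.

Lemma cluster_closed (G : set_system T) : closed (cluster G).
Proof. by rewrite clusterE; apply: closed_bigI => A _; exact: closed_closure. Qed.

Lemma closed_cluster_mem (C : set T) (u : nat -> T) y :
  closed C -> (forall n, C (u n)) -> cluster (u @ \oo) y -> C y.
Proof.
move=> cC Cu yu; apply: cC => B yB; apply: yu yB.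
by apply/near_inftyP; exists 0%N => n _; exact: Cu.
Qed.

Lemma cluster_subseq (u : nat -> T) (phi : nat -> nat) y :
  (forall n, (n <= phi n)%N) -> cluster ((u \o phi) @ \oo) y -> cluster (u @ \oo) y.
Proof.
move=> phi_ge yu A B /near_inftyP[N uA] yB; apply: yu yB.
by apply/near_inftyP; exists N => n Nn; apply: uA; exact: leq_trans Nn (phi_ge n).
Qed.

Lemma within_continuous_nbhs {U : topologicalType} {X : set T} {F : T -> U} {x} :
  {within X, continuous F} -> X x ->
  forall B, nbhs (F x) B -> nbhs x [set u | X u -> B (F u)].
Proof. by move=> /subspace_continuousP FX Xx B; exact: FX. Qed.

Lemma cvg_comp_within {U : topologicalType} {X : set T} {F : T -> U} {u : nat -> T} {y} :
  {within X, continuous F} -> (forall n, X (u n)) -> X y ->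
  u @ \oo --> y -> (F \o u) @ \oo --> F y.
Proof.
move=> FX Xu Xy uy B /(within_continuous_nbhs FX Xy)/uy/near_inftyP[N uB].
by apply/near_inftyP; exists N => n Nn; exact: uB n Nn (Xu n).
Qed.

Lemma cluster_comp_within {U : topologicalType} {X : set T} {F : T -> U} {u : nat -> T} {y} :
  {within X, continuous F} -> (forall n, X (u n)) -> X y ->
  cluster (u @ \oo) y -> cluster ((F \o u) @ \oo) (F y).
Proof.
move=> FX Xu Xy yu A B /near_inftyP[N FuA] /(within_continuous_nbhs FX Xy) yB.
have [|_ [[n Nn <-] Bu]] := yu [set u n | n in [set n | (N <= n)%N]] _ _ yB.
  by apply/near_inftyP; exists N => n Nn; exists n.
by exists (F (u n)); split; [exact: FuA | exact: Bu (Xu n)].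
Qed.

Lemma precompact_in_sub {X O S : set T} :
  precompact_in X O -> S `<=` closure O `&` X -> precompact_in X S.
Proof.
move=> [_ cK] SK; split=> [z /SK[]//|].
have -> : closure S `&` X = (closure O `&` X) `&` closure S.
  apply/seteqP; split=> [z [Sz Xz]|z [[_ Xz] Sz]]; split => //; split => //.
  rewrite [closure O](closure_id _).1; last exact: closed_closure.
  by apply: closureS Sz => w /SK[].
by apply: compact_closedI => //; exact: closed_closure.
Qed.

Lemma precompact_closure_sub {X S : set T} :
  hausdorff_space T -> precompact_in X S -> closure S `<=` X.
Proof.
move=> hT [SX cK] z Sz.
suff [] : (closure S `&` X) z by [].
rewrite (closure_id (closure S `&` X)).1; last exact: compact_closed cK.
by apply: closureS Sz => s Ss; split; [exact: subset_closure | exact: SX].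
Qed.

End Topology.

Section OmegaLimits.
Context {R : realType} {M : pseudoMetricType R}.

Lemma cluster_cvg_subseq (u : nat -> M) y : cluster (u @ \oo) y ->
  exists2 phi : nat -> nat, (forall n, (n <= phi n)%N) & (u \o phi) @ \oo --> y.
Proof.
move=> yu.
have /choice[phi phiP] n : exists j, (n <= j)%N /\ ball y n.+1%:R^-1 (u j).
  have [||z [[j nj <-] yuj]] := yu [set u j | j in [set j | (n <= j)%N]] (ball y n.+1%:R^-1).
  - by apply/near_inftyP; exists n => j nj; exists j.
  - by apply: nbhsx_ballx; rewrite invr_gt0.
  by exists j.
exists phi => [n|]; first by case: (phiP n).
apply/cvg_ballP => e e0.
have /near_inftyP[N Ne] := near_infty_natSinv_lt (PosNum e0).
apply/near_inftyP; exists N => n Nn /=.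
by apply: le_ball (phiP n).2; exact/ltW/Ne.
Qed.

Lemma omega_limE (X : set M) (h : M -> M) x :
  omega_lim X h x = X `&` cluster ((fun n => iter n h x) @ \oo).
Proof.
apply/seteqP; split => [y [Xy [k [k_oo ky]]]|y [Xy /cluster_cvg_subseq[phi phi_ge ky]]].
  split => // A B /near_inftyP[N uA] /ky/near_inftyP[J' kB].
  have [J kN] := k_oo N.
  exists (iter (k (J + J')%N) h x); split; first by apply/uA/kN/leq_addr.
  exact/kB/leq_addl.
split => //; exists phi; split => // N; exists N => j Nj.
exact: leq_trans Nj (phi_ge j).
Qed.

Lemma omega_limT (X : set M) (h : M -> M) x :
  omega_lim X h x = X `&` omega_lim setT h x.
Proof. by rewrite !omega_limE setTI. Qed.

Lemma omega_lim_closed (h : M -> M) x : closed (omega_lim setT h x).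
Proof. by rewrite omega_limE setTI; exact: cluster_closed. Qed.

Lemma omega_lim_sub_closure {X : set M} {h : M -> M} {x} :
  omega_lim X h x `<=` closure (fwd_orbit h x).
Proof.
move=> y; rewrite omega_limE => -[_].
apply: (@closed_cluster_mem _ _ (fun n => iter n h x)) => [|n].
  exact: closed_closure.
by apply: subset_closure; exists n.
Qed.

Lemma omega_lim_iterS (X : set M) (h : M -> M) x :
  omega_lim X h (h x) = omega_lim X h x.
Proof.
rewrite !omega_limE -(filter_shiftS (fun n => iter n h x)).
have -> : (fun n => iter n h (h x)) = (fun n => iter n.+1 h x).
  by apply: funext => n; rewrite iterSr.
by [].
Qed.

Lemma omega_lim_iter_can (X : set M) (h hinv : M -> M) x n :
  cancel hinv h -> omega_lim X h (iter n hinv x) = omega_lim X h x.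
Proof.
by move=> hinvK; elim: n => [|n IH] //=; rewrite -omega_lim_iterS hinvK.
Qed.

Lemma omega_lim_invT {h hinv : M -> M} {x y} : continuous hinv -> cancel h hinv ->
  omega_lim setT h x y -> omega_lim setT h x (hinv y).
Proof.
move=> chinv hK; rewrite !omega_limE => -[_ yx]; split => //.
have := cluster_comp_within (continuous_subspaceT (A := setT) chinv) (fun=> I) I yx.
rewrite -filter_shiftS.
have -> : (fun n => (hinv \o (fun n => iter n h x)) n.+1) = (fun n => iter n h x).
  by apply: funext => n /=; rewrite hK.
by [].
Qed.

Lemma omega_lim_inv_sub {h hinv : M -> M} {x y} : continuous hinv -> cancel h hinv ->
  omega_lim setT h x y -> omega_lim setT hinv y `<=` omega_lim setT h x.
Proof.
move=> chinv hK yx z; rewrite omega_limE => -[_].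
apply: (@closed_cluster_mem _ _ (fun n => iter n hinv y)) => [|n].
  exact: omega_lim_closed.
by elim: n => [|n IH] //=; exact: omega_lim_invT.
Qed.

Lemma omega_lim_nonempty {X : set M} {h : M -> M} {x} :
  precompact_in X (fwd_orbit h x) -> omega_lim X h x !=set0.
Proof.
move=> [orbX cK].
have [|y [[_ Xy] yx]] := cK ((fun n => iter n h x) @ \oo) _.
  apply/near_inftyP; exists 0%N => n _; split; last by apply: orbX; exists n.
  by apply: subset_closure; exists n.
by exists y; rewrite omega_limE.
Qed.

Lemma omega_lim_precompact_inv {X : set M} {h hinv : M -> M} {x y} :
  hausdorff_space M -> continuous hinv -> cancel h hinv ->
  precompact_in X (fwd_orbit h x) -> omega_lim X h x y ->
  precompact_in X (fwd_orbit hinv y).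
Proof.
move=> hM chinv hK pre; rewrite omega_limT => -[_ yx].
have orbX := precompact_closure_sub hM pre.
have orb_sub n : omega_lim setT h x (iter n hinv y).
  by elim: n => [|n IH] //=; exact: omega_lim_invT.
apply: precompact_in_sub pre _ => _ [n ->].
have cl := omega_lim_sub_closure _ (orb_sub n).
by split; [exact: cl | exact: orbX _ cl].
Qed.

End OmegaLimits.

(* The premise [X (h x)] makes the notion invariant under inverting [h] and [k]. *)
Definition semiconj_on {M Z : Type} (X : set M) (h : M -> M) (k : Z -> Z) (F : M -> Z) :=
  forall x, X x -> X (h x) -> F (h x) = k (F x).

Section Semiconjugacy.
Context {M Z : Type} {X : set M} {h hinv : M -> M} {k kinv : Z -> Z} {F : M -> Z}.

Lemma semiconj_on_iter {x} : semiconj_on X h k F -> fwd_orbit h x `<=` X ->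
  forall n, F (iter n h x) = iter n k (F x).
Proof.
move=> Fh orbX; elim => [|n IH] //=.
by rewrite -IH Fh //; apply: orbX; [exists n | exists n.+1].
Qed.

Lemma semiconj_on_inv : semiconj_on X h k F -> cancel hinv h -> cancel k kinv ->
  semiconj_on X hinv kinv F.
Proof. by move=> Fh hinvK kK x Xx Xhx; rewrite -{2}(hinvK x) Fh ?hinvK // kK. Qed.

End Semiconjugacy.

Section SemiconjugateOmegaLimits.
Context {R : realType} {M Z : pseudoMetricType R}.

Lemma omega_lim_semiconj {X : set M} {h : M -> M} {k : Z -> Z} {F : M -> Z} {x} :
  hausdorff_space Z -> {within X, continuous F} -> semiconj_on X h k F ->
  precompact_in X (fwd_orbit h x) ->
  omega_lim setT k (F x) = F @` omega_lim X h x.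
Proof.
move=> hZ FX Fh [orbX cK].
have Xu n : X (iter n h x) by apply: orbX; exists n.
rewrite !omega_limE setTI.
have -> : (fun n => iter n k (F x)) = F \o (fun n => iter n h x).
  by apply: funext => n /=; rewrite (semiconj_on_iter Fh orbX).
apply/seteqP; split => [b /cluster_cvg_subseq[phi phi_ge Fb]|_ [y [Xy yx] <-]]; last first.
  exact: cluster_comp_within FX Xu Xy yx.
have [|y [[_ Xy] yphi]] := cK ((fun n => iter (phi n) h x) @ \oo) _.
  apply/near_inftyP; exists 0%N => n _.
  by split; [apply: subset_closure; exists (phi n) | exact: Xu].
exists y; first by split; [| exact: cluster_subseq phi_ge yphi].
have := cvg_cluster Fb (cluster_comp_within FX (fun n => Xu (phi n)) Xy yphi).
by move/hZ ->.
Qed.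

Lemma omega_lim_basin {X : set M} {h : M -> M} {k kinv : Z -> Z} {F : M -> Z} {x y} :
  {within X, continuous F} -> semiconj_on X h k F -> cancel k kinv ->
  closed_basins kinv -> fwd_orbit h x `<=` X -> omega_lim X h x y ->
  omega_lim setT kinv (F y) = omega_lim setT kinv (F x).
Proof.
move=> FX Fh kK cb orbX [Xy [kk [_ kk_y]]].
have Xu n : X (iter n h x) by apply: orbX; exists n.
have basin := cb _ (ex_intro2 _ _ (F x) I erefl).
suff [] : Dplus setT kinv (omega_lim setT kinv (F x)) (F y) by [].
apply: (closed_cvg _ basin) (cvg_comp_within FX (fun j => Xu (kk j)) Xy kk_y).
apply/near_inftyP; exists 0%N => j _; split => //=.
by rewrite (semiconj_on_iter Fh orbX) omega_lim_iter_can.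
Qed.

Lemma omega_lim_level_closed {X : set M} {k : Z -> Z} {F : M -> Z} x :
  {within X, continuous F} -> closed_basins k ->
  closure [set z | X z /\ omega_lim setT k (F z) = omega_lim setT k (F x)] `&` X `<=`
  [set z | omega_lim setT k (F z) = omega_lim setT k (F x)].
Proof.
move=> FX cb y [y_cl Xy].
have basin := cb _ (ex_intro2 _ _ (F x) I erefl).
suff [] : Dplus setT k (omega_lim setT k (F x)) (F y) by [].
apply: basin => B /(within_continuous_nbhs FX Xy)/y_cl[z [[Xz zx] Bz]].
by exists (F z); split; [split | exact: Bz].
Qed.

End SemiconjugateOmegaLimits.

Lemma path_connected_countable_const {R : realType} {T : topologicalType} {U : Type}
    {X : set T} (phi : T -> U) :
  path_connected R X -> countable (phi @` X) ->
  (forall x, closure [set z | X z /\ phi z = phi x] `&` X `<=` [set z | phi z = phi x]) ->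
  forall x y, X x -> X y -> phi x = phi y.
Proof.
move=> pcX cphi lvl x y Xx Xy.
have [i i_inj] := countable_injP _ cphi.
have [gam [cgam [gam0 [gam1 gamX]]]] := pcX x y Xx Xy.
have gamXt t : 0 <= t <= 1 -> X (gam t) by move=> t01; apply: gamX; exists t; rewrite //= in_itv.
pose c t := i (phi (gam t)).
have c_inj s t : 0 <= s <= 1 -> 0 <= t <= 1 -> c s = c t -> phi (gam s) = phi (gam t).
  move=> s01 t01 /i_inj; apply; apply: mem_set.
    by exists (gam s); first exact: gamXt.
  by exists (gam t); first exact: gamXt.
suff /c_inj : c 0 = c 1 by rewrite gam0 gam1; apply; rewrite ler01 lexx.
apply: closed_fibers01_const => v t t_cl.
have t01 : t \in `[0, 1] by apply: itv_closed; apply: closureS t_cl => s [s01 _]; rewrite /= in_itv.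
have [s0 [[s001 cs0] _]] := t_cl setT filterT.
split => //; rewrite -cs0; congr i; apply: lvl; split; last exact: gamXt.
move=> B /(within_continuous_nbhs cgam t01)/t_cl[s [[s01 cs] Bs]].
exists (gam s); split; last by apply: Bs; rewrite /= in_itv.
by split; [exact: gamXt | apply: c_inj; rewrite // cs].
Qed.

Section HatLimitSets.
Context {R : realType} {M Z : pseudoMetricType R} {X : set M}
  {h hinv : M -> M} {k kinv : Z -> Z} {F : M -> Z}.
Hypotheses (hM : hausdorff_space M) (hZ : hausdorff_space Z)
  (ch : continuous h) (hinvK : cancel hinv h)
  (ckinv : continuous kinv) (kK : cancel k kinv) (kinvK : cancel kinv k)
  (FX : {within X, continuous F})
  (Fh : semiconj_on X h k F) (Fhinv : semiconj_on X hinv kinv F)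
  (precompact : forall x, X x ->
     precompact_in X (fwd_orbit h x) \/ precompact_in X (fwd_orbit hinv x))
  (cb : closed_basins k).

Lemma omega_lim_semiconj_Wset x : X x ->
  exists2 Om, Wset X h Om & omega_lim setT k (F x) = F @` Om.
Proof.
move=> Xx; case: (precompact x Xx) => pre.
  by exists (omega_lim X h x); [exists x | exact: omega_lim_semiconj].
have [y yx] := omega_lim_nonempty pre.
have Xy : X y by case: yx.
exists (omega_lim X h y); first by exists y.
rewrite -(omega_lim_basin FX Fhinv kinvK cb pre.1 yx).
exact: omega_lim_semiconj hZ FX Fh (omega_lim_precompact_inv hM ch hinvK pre yx).
Qed.

Hypotheses (pcX : path_connected R X) (cW : countable (Wset X h)).

Lemma omega_lim_semiconj_const {x y} : X x -> X y ->
  omega_lim setT k (F x) = omega_lim setT k (F y).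
Proof.
move: x y; apply: (path_connected_countable_const (fun z => omega_lim setT k (F z)) pcX).
  apply: sub_countable cW; apply: card_le_trans (card_image_le (fun Om => F @` Om) _).
  apply: subset_card_le => _ [z Xz <-].
  by have [Om WOm ->] := omega_lim_semiconj_Wset z Xz; exists Om.
by move=> z; exact: omega_lim_level_closed.
Qed.

Lemma image_What S x0 : What X h S -> X x0 -> F @` S = omega_lim setT k (F x0).
Proof.
move=> [_ [x [[Xx <-] pre]]] Xx0.
by rewrite -(omega_lim_semiconj hZ FX Fh pre); exact: omega_lim_semiconj_const.
Qed.

Lemma What_omega_lim_inv_sub S x0 : What X h S -> X x0 ->
  (forall y y', X y -> X y' -> omega_lim setT kinv (F y) = omega_lim setT kinv (F y')) ->
  omega_lim setT kinv (F x0) `<=` omega_lim setT k (F x0).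
Proof.
move=> [_ [x [[Xx _] pre]]] Xx0 kinv_const.
have [y yx] := omega_lim_nonempty pre.
have Xy : X y by case: yx.
have Fyx : omega_lim setT k (F x) (F y) by rewrite (omega_lim_semiconj hZ FX Fh pre); exists y.
rewrite (kinv_const x0 y Xx0 Xy) (omega_lim_semiconj_const Xx0 Xx).
exact: omega_lim_inv_sub ckinv kK Fyx.
Qed.

End HatLimitSets.

Theorem lemma28 (R : realType) (M : pseudoMetricType R)
  (f finv : M -> M) (X : set M)
  (Z : pseudoMetricType R) (g ginv : Z -> Z) (F : M -> Z) :
  metric_space M -> separable_space M ->
  continuous f -> continuous finv -> cancel f finv -> cancel finv f ->
  (forall x, X x -> X (f x)) ->
  path_connected R X ->
  (* (T1) *)
  metric_space Z -> separable_space Z ->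
  continuous g -> continuous ginv -> cancel g ginv -> cancel ginv g ->
  {within X, continuous F} ->
  (forall x, X x -> F (f x) = g (F x)) ->
  closed_basins g -> closed_basins ginv ->
  (* (T2) *)
  (forall xi, X xi ->
     precompact_in X (fwd_orbit f xi) \/ precompact_in X (bwd_orbit finv xi)) ->
  (* (T3) *)
  countable (Wset X f `|` Aset X finv) ->
  forall S S', (What X f S \/ Ahat X finv S) ->
               (What X f S' \/ Ahat X finv S') ->
               F @` S = F @` S'.
Proof.
move=> hM _ cf cfinv fK finvK _ pcX hZ _ cg cginv gK ginvK FX Ff cbg cbginv
  T2 T3 S S' HS HS'.
have Ff' : semiconj_on X f g F by move=> x Xx _; exact: Ff.
have Ffinv := semiconj_on_inv Ff' finvK gK.
have T2' x : X x -> precompact_in X (fwd_orbit finv x) \/ precompact_in X (fwd_orbit f x).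
  by move/T2/or_comm.
have cWf : countable (Wset X f) by apply: sub_countable T3; apply/subset_card_le/subsetUl.
have cWfinv : countable (Wset X finv) by apply: sub_countable T3; apply/subset_card_le/subsetUr.
have const_g := omega_lim_semiconj_const hM hZ cf finvK ginvK FX Ff' Ffinv T2 cbg pcX cWf.
have const_ginv :=
  omega_lim_semiconj_const hM hZ cfinv fK gK FX Ffinv Ff' T2' cbginv pcX cWfinv.
have image_f := image_What hM hZ cf finvK ginvK FX Ff' Ffinv T2 cbg pcX cWf.
have image_finv :=
  image_What hM hZ cfinv fK gK FX Ffinv Ff' T2' cbginv pcX cWfinv.
have [x0 Xx0] : X !=set0 by case: HS => -[_ [x [[Xx _] _]]]; exists x.
have g_ginv S1 S2 : What X f S1 -> What X finv S2 ->
    omega_lim setT g (F x0) = omega_lim setT ginv (F x0).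
  move=> HS1 HS2; apply/seteqP; split.
    exact: What_omega_lim_inv_sub hM hZ cfinv fK cg ginvK gK FX Ffinv Ff' T2' cbginv pcX
      cWfinv _ _ HS2 Xx0 const_g.
  exact: What_omega_lim_inv_sub hM hZ cf finvK cginv gK ginvK FX Ff' Ffinv T2 cbg pcX
    cWf _ _ HS1 Xx0 const_ginv.
case: HS HS' => [HS|HS] [HS'|HS'].
- by rewrite (image_f _ _ HS Xx0) (image_f _ _ HS' Xx0).
- by rewrite (image_f _ _ HS Xx0) (image_finv _ _ HS' Xx0) (g_ginv _ _ HS HS').
- by rewrite (image_finv _ _ HS Xx0) (image_f _ _ HS' Xx0) (g_ginv _ _ HS' HS).
- by rewrite (image_finv _ _ HS Xx0) (image_finv _ _ HS' Xx0).
Qed.
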